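(* Assume $n>3t+2d$. In any execution of Algorithm 1, if a correct process $p_i$ mbrb-broadcasts an app-message $m$ with sequence number $sn$, then $\ell=c-d$ correct processes mbrb-deliver $m$ from $p_i$ with sequence number $sn$ at most 2 communication steps later if $d<\frac{c-\lfloor (n+t)/2\rfloor}{\lfloor (n+t)/2\rfloor+1}$, and at most 3 communication steps later if $d<c-\sqrt{c\cdot\frac{n+t}{2}}$.
   Context: System model. There are $n$ asynchronous processes $p_1,\dots,p_n$ with distinct known identities. Up to $t$ are Byzantine (arbitrary behavior); the rest are correct; $c$ is the number of correct processes in the execution, $n-t\le c\le n$. The network is fully connected, asynchronous, never corrupts/duplicates/creates messages; ''broadcast $M$'' sends $M$ to all $n$ processes; a message adversary may suppress, per broadcast by a correct process, up to $d$ ($0\le d<c$) copies addressed to correct processes, all other copies among correct processes being received. Signatures are unforgeable and public keys are known. Time is measured in communication steps: local computation takes zero time and every imp-message has the same transfer delay of one step. Algorithm 1 (code for $p_i$). Each process stores, for each triplet $(m,sn,j)$, a set of saved valid signatures of that triplet, at most one per signer. On $\mathrm{mbrb\_broadcast}(m,sn)$: $p_i$ saves its own signature of $(m,sn,i)$ and broadcasts $\mathrm{BUNDLE}(m,sn,i,S)$, $S$ the saved signatures for $(m,sn,i)$. On receiving $\mathrm{BUNDLE}(m,sn,j,sigs)$: if $p_i$ has not already mbrb-delivered some $(-,sn,j)$ and $sigs$ contains a valid signature of $(m,sn,j)$ by $p_j$, then: (1) save all new valid signatures of $(m,sn,j)$ in $sigs$; (2) if $p_i$ has not yet signed any $(-,sn,j)$,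 save its own signature of $(m,sn,j)$ and broadcast $\mathrm{BUNDLE}(m,sn,j,\text{all saved signatures for }(m,sn,j))$; (3) if strictly more than $\frac{n+t}{2}$ signatures for $(m,sn,j)$ are saved, broadcast $\mathrm{BUNDLE}(m,sn,j,\text{all saved signatures})$ and mbrb-deliver $(m,sn,j)$. A correct process never uses the same sequence number twice. *)

From Stdlib Require Import Reals.
From mathcomp Require Import all_boot.
Set Implicit Arguments. Unset Strict Implicit. Unset Printing Implicit Defensive.

(* Model of ONE mbrb instance: fixed source p_i (index [src]) and fixed     *)
(* sequence number sn.  Instances with different (sn, j) do not interact in *)
(* Algorithm 1, so this loses nothing.                       *)
(* A BUNDLE(m', sn, src, sigs) is represented by the pair (m', S) where S   *)
(* is the set of signers of the VALID signatures of (m', sn, src) in sigs   *)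
(* (invalid signatures are discarded by every correct receiver anyway).     *)

Section Model.
Variables (n : nat) (M : eqType).

Definition bundle := (M * {set 'I_n})%type.

Record pstate := PState {
  saved : M -> {set 'I_n};     (* saved signers for triplet (m', sn, src) *)
  signed : bool;               (* has signed some (-, sn, src) *)
  delivered : option M
}.

Definition init_state : pstate := PState (fun _ => set0) false None.

Definition upd (f : M -> {set 'I_n}) (x : M) (S : {set 'I_n}) : M -> {set 'I_n} :=
  fun y => if y == x then S else f y.

(* Handler of Algorithm 1 at correct process q upon BUNDLE(x, sn, src, sigs);
   returns the new state and the broadcasts it performs (in order). *)
Definition on_bundle (t : nat) (src q : 'I_n) (s : pstate) (b : bundle)
    : pstate * seq bundle :=
  let x := b.1 in let sigs := b.2 in
  if (delivered s != None) || (src \notin sigs) then (s, [::]) else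
  let S1 := saved s x :|: sigs in
  let S2 := if signed s then S1 else q |: S1 in
  let out1 := if signed s then [::] else [:: (x, S2)] in
  let sv := upd (saved s) x S2 in
  if n + t < 2 * #|S2|                                   (* step (3): #S2 > (n+t)/2 *)
  then (PState sv true (Some x), out1 ++ [:: (x, S2)])
  else (PState sv true None, out1).

Fixpoint on_bundles (t : nat) (src q : 'I_n) (s : pstate) (l : seq bundle)
    : pstate * seq bundle :=
  match l with
  | [::] => (s, [::])
  | b :: l' =>
      let r1 := on_bundle t src q s b in
      let r2 := on_bundles t src q r1.1 l' in
      (r2.1, r1.2 ++ r2.2)
  end.

Definition bcast_state (src : 'I_n) (m : M) : pstate :=
  PState (upd (fun _ => set0) m [set src]) true None.

(* An execution with unit transfer delay, starting with src's
   mbrb_broadcast(m, sn) at time 0.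
   - st a q    : state of correct q at the end of time a
   - inbox a q : bundles received (and processed, in this order) by q at time a
   - out a p   : broadcasts performed by correct p at time a (in order)
   - recv a p k q : the k-th broadcast of p at time a reaches q (at time a+1)
   - byz a q   : bundles sent by Byzantine processes received by q at time a *)
Definition received_correct (C : {set 'I_n}) (out : nat -> 'I_n -> seq bundle)
    (recv : nat -> 'I_n -> nat -> 'I_n -> bool) (a : nat) (q : 'I_n) : seq bundle :=
  match a with
  | 0 => [::]
  | a'.+1 => flatten [seq mask [seq recv a' p k q | k <- iota 0 (size (out a' p))]
                               (out a' p) | p <- enum C]
  end.

Definition execution (t d : nat) (C : {set 'I_n}) (src : 'I_n) (m : M)
    (st : nat -> 'I_n -> pstate) (inbox out : nat -> 'I_n -> seq bundle)
    (recv : nat -> 'I_n -> nat -> 'I_n -> bool)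
    (byz : nat -> 'I_n -> seq bundle) : Prop :=
  (forall q, q \in C ->
     let pre := if q == src then (bcast_state src m, [:: (m, [set src])])
                else (init_state, [::]) in
     let r := on_bundles t src q pre.1 (inbox 0 q) in
     st 0 q = r.1 /\ out 0 q = pre.2 ++ r.2)
  /\ (forall a q, q \in C ->
        (st a.+1 q, out a.+1 q) = on_bundles t src q (st a q) (inbox a.+1 q))
  (* what a correct process receives: the non-suppressed copies of broadcasts
     by correct processes one step earlier, plus Byzantine bundles, in any order *)
  /\ (forall a q, q \in C ->
        perm_eq (inbox a q) (received_correct C out recv a q ++ byz a q))
  (* message adversary: at most d correct recipients suppressed per broadcast *)
  /\ (forall a p k, p \in C -> k < size (out a p) ->
        #|[set q in C | ~~ recv a p k q]| <= d)
  (* unforgeability: a Byzantine bundle received at time a can carry a correct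
     process k's signature only if k signed that triplet by time a-2
     (k's broadcast reaches Byzantines at a-1, their message arrives at a) *)
  /\ (forall a q b k, q \in C -> b \in byz a q -> k \in C -> k \in b.2 ->
        2 <= a /\ k \in saved (st (a - 2) k) b.1).

End Model.

Definition two_step_cond (n t d c : nat) : Prop :=
  Rlt (INR d) (Rdiv (Rminus (INR c) (INR ((n + t)./2)))
                    (INR ((n + t)./2).+1)).

Definition three_step_cond (n t d c : nat) : Prop :=
  Rlt (INR d) (Rminus (INR c) (sqrt (Rmult (INR c) (Rdiv (INR (n + t)) (INR 2))))).

From Stdlib Require Import Reals Lra.
From mathcomp Require Import all_boot zify.
Set Implicit Arguments. Unset Strict Implicit. Unset Printing Implicit Defensive.

(* Unforgeability of the source's signature makes [m] the only message a correct
   process can save, rebroadcast or deliver.  One step after the broadcast, all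
   but at most [d + 1] correct processes (the echoers) have signed and
   rebroadcast a bundle carrying the source's signature and their own.  A
   correct process still undelivered after two steps holds the signatures of
   the source and of every echoer it heard from, and at most (n+t)/2 in total.
   Counting the pairs (echoer, undelivered process) in two ways, each echo
   missing at most [d] correct processes, bounds the number [f] of undelivered
   processes: the first condition forces [f <= d]; the second forces [f < c],
   so some correct process delivers within two steps, and its delivery
   broadcast carries a quorum that all but [d] correct processes receive one
   step later. *)

Lemma mem_mask_nth (T : eqType) (x0 : T) (s : seq T) (bs : seq bool) k :
  size bs = size s -> k < size s -> nth false bs k -> nth x0 s k \in mask bs s.
Proof.
elim: s bs k => [|x s IH] [|b bs] [|k] //=; first by move=> _ _ ->; rewrite mem_head.
by move=> [Hs] Hk Hb; case: b; rewrite ?inE (IH bs k Hs Hk Hb) ?orbT.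
Qed.

Lemma card_sep_lower (T : finType) (A : {set T}) (P : pred T) k :
  #|[set x in A | ~~ P x]| <= k -> #|A| <= #|[set x in A | P x]| + k.
Proof.
rewrite -(cardsID [set x | P x] A) -setIdE => Hk.
rewrite leq_add2l (leq_trans _ Hk) // subset_leq_card //.
by apply/subsetP => x; rewrite !inE andbC.
Qed.

Lemma double_count (T : finType) (A B : {set T}) (R : rel T) :
  \sum_(x in A) #|[set y in B | R y x]| = \sum_(y in B) #|[set x in A | R y x]|.
Proof.
have Ecard (X : {set T}) (P : pred T) : #|[set y in X | P y]| = \sum_(y in X) (P y : nat).
  rewrite -sum1_card [in LHS]big_mkcond [in RHS]big_mkcond /=.
  by apply: eq_bigr => y _; rewrite !inE; case: (y \in X); case: (P y).
under eq_bigr do rewrite Ecard.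
by rewrite exchange_big /=; apply: eq_bigr => y _; rewrite Ecard.
Qed.

Lemma two_step_cond_nat n t d c :
  two_step_cond n t d c -> d * ((n + t)./2).+1 + (n + t)./2 < c.
Proof.
rewrite /two_step_cond; set h := (n + t)./2 => H.
have Hh : Rlt 0 (INR h.+1) by apply: lt_0_INR; apply/ltP.
have := Rmult_lt_compat_r _ _ _ Hh H.
rewrite /Rdiv Rmult_assoc Rinv_l ?Rmult_1_r; last exact: Rgt_not_eq.
by move=> Hlt; apply/ltP; apply: INR_lt; rewrite plus_INR mult_INR; lra.
Qed.

Lemma three_step_cond_nat n t d c : d < c ->
  three_step_cond n t d c -> c * (n + t)./2 < (c - d) * (c - d).
Proof.
rewrite /three_step_cond; set h := (n + t)./2 => Hdc H.
set X := Rmult (INR c) (Rdiv (INR (n + t)) (INR 2)) in H *.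
have HX : Rle 0 X.
  apply: Rmult_le_pos; first exact: pos_INR.
  apply: Rmult_le_pos; first exact: pos_INR.
  by apply: Rlt_le; apply: Rinv_0_lt_compat; apply: lt_0_INR; apply/ltP.
have Hcd : INR (c - d) = Rminus (INR c) (INR d).
  by rewrite minus_INR //; apply/leP; exact: ltnW.
have Hsqrt : Rlt (sqrt X) (INR (c - d)) by rewrite Hcd; lra.
have HXlt : Rlt X (Rmult (INR (c - d)) (INR (c - d))).
  rewrite -{1}(sqrt_sqrt X HX).
  by apply: Rmult_le_0_lt_compat => //; exact: sqrt_pos.
have Hch : Rle (INR (c * h)) X.
  rewrite mult_INR /X; apply: Rmult_le_compat_l; first exact: pos_INR.
  have : Rle (INR (2 * h)) (INR (n + t)).
    by apply: le_INR; apply/leP; rewrite -[leqRHS]odd_double_half -mul2n leq_addl.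
  by rewrite mult_INR /= => Hle; apply: (Rmult_le_reg_l 2); [lra | field_simplify; lra].
by apply/ltP; apply: INR_lt; apply: Rle_lt_trans Hch _; rewrite mult_INR.
Qed.

Section Handler.
Variables (n t : nat) (M : eqType) (src q : 'I_n) (m : M).
Implicit Types (s : pstate n M) (b : bundle n M) (l : seq (bundle n M)).

Definition valid b := src \in b.2.

(* By unforgeability, the only valid bundles correct processes ever handle
   are bundles for [m]; [sound_state] is the matching state invariant. *)
Definition sound_bundle b := valid b ==> (b.1 == m).

Definition sound_state s :=
  (forall x, x != m -> src \notin saved s x) /\
  (delivered s = None \/ delivered s = Some m).

Definition below_quorum s := 2 * #|saved s m| <= n + t.

Lemma on_bundles_delivered s l :
  delivered s != None -> on_bundles t src q s l = (s, [::]).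
Proof. by elim: l => [|b l IH] //= Hd; rewrite /on_bundle Hd /= IH. Qed.

Lemma on_bundles_invalid s l :
  all (fun b => ~~ valid b) l -> on_bundles t src q s l = (s, [::]).
Proof.
elim: l => [|b l IH] //= /andP [Hb Hl].
by rewrite /on_bundle -/(valid b) Hb orbT /= IH.
Qed.

Lemma on_bundle_sound s b : sound_bundle b -> sound_state s ->
  sound_state (on_bundle t src q s b).1 /\
  all (fun b => b.1 == m) (on_bundle t src q s b).2.
Proof.
move=> Hb [Hsrc Hdel]; rewrite /on_bundle.
case: ifP => [//|]; rewrite -/(valid b) => /norP [_ /negbNE Hv].
have /eqP Hx : b.1 == m by rewrite (implyP Hb).
have Hsound S d : d = None \/ d = Some m ->
    sound_state (PState (upd (saved s) m S) true d).
  by split=> // x Hxm; rewrite /upd /= (negbTE Hxm); exact: Hsrc.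
by case: ifP => _; case: (signed s);
  rewrite /= Hx ?eqxx; split=> //; apply: Hsound; [right|right|left|left].
Qed.

Lemma on_bundles_sound s l : all sound_bundle l -> sound_state s ->
  sound_state (on_bundles t src q s l).1 /\
  all (fun b => b.1 == m) (on_bundles t src q s l).2.
Proof.
elim: l s => [|b l IH] s //= /andP [Hb Hl] Hs.
have [Hs1 Ho1] := on_bundle_sound Hb Hs.
have [Hs2 Ho2] := IH _ Hl Hs1.
by rewrite all_cat Ho1 Ho2.
Qed.

Lemma on_bundle_undelivered s b : sound_bundle b ->
  delivered (on_bundle t src q s b).1 = None ->
  [/\ delivered s = None,
      saved s m \subset saved (on_bundle t src q s b).1 m,
      (valid b -> b.2 \subset saved (on_bundle t src q s b).1 m) &
      (valid b || below_quorum s -> below_quorum (on_bundle t src q s b).1)].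
Proof.
move=> Hb; rewrite /on_bundle -/(valid b).
case: ifP => [Hskip /= Hd|/norP [/negbNE Hd0 /negbNE Hv]].
  by move: Hskip; rewrite Hd /=; case: (valid b).
have /eqP Hx : b.1 == m by rewrite (implyP Hb).
case: ifP => // Hq _ /=; move/eqP: Hd0 => Hd0.
have Hupd S : upd (saved s) b.1 S m = S by rewrite /upd Hx eqxx.
rewrite /below_quorum /= !Hupd.
set S1 := saved s b.1 :|: b.2.
have HS : S1 \subset (if signed s then S1 else q |: S1).
  by case: (signed s); rewrite ?subsetUr.
split=> //.
- by apply: subset_trans HS; rewrite /S1 Hx subsetUl.
- by move=> _; apply: subset_trans HS; rewrite subsetUr.
- by move=> _; rewrite leqNgt; apply/negbT; exact: Hq.
Qed.

Lemma on_bundles_undelivered s l : all sound_bundle l ->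
  delivered (on_bundles t src q s l).1 = None ->
  [/\ delivered s = None,
      saved s m \subset saved (on_bundles t src q s l).1 m,
      (forall b, b \in l -> valid b ->
         b.2 \subset saved (on_bundles t src q s l).1 m) &
      (has valid l || below_quorum s ->
         below_quorum (on_bundles t src q s l).1)].
Proof.
elim: l s => [|b l IH] s /=; first by move=> _ ->; split.
move=> /andP [Hb Hl] Hd.
have [D1 S1 V1 B1] := IH _ Hl Hd.
have [D0 S0 V0 B0] := on_bundle_undelivered Hb D1.
split=> //.
- exact: subset_trans S0 S1.
- move=> b'; rewrite inE => /orP [/eqP -> | Hb'] Hv; last exact: V1.
  exact: subset_trans (V0 Hv) S1.
- rewrite -orbA => /orP [Hv|Hrest]; first by apply: B1; rewrite B0 ?Hv ?orbT.
  by apply: B1; case/orP: Hrest => [-> // | HB]; rewrite B0 ?HB ?orbT.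
Qed.

Lemma on_bundles_quorum_broadcast s l : delivered s = None ->
  delivered (on_bundles t src q s l).1 != None ->
  exists2 b, b \in (on_bundles t src q s l).2 & (n + t < 2 * #|b.2|) && valid b.
Proof.
elim: l s => [|b l IH] s /=; first by move=> ->.
move=> Hd; rewrite {1 3}/on_bundle Hd /= -/(valid b).
case: ifP => Hv.
  by move=> /(IH _ Hd) [b' Hb' Hc]; exists b' => //; rewrite /on_bundle Hd -/(valid b) Hv.
set S2 := (if signed s then _ else _).
have HS2 : src \in S2.
  have : src \in saved s b.1 :|: b.2 by apply/setUP; right; exact: negbFE Hv.
  by rewrite /S2; case: (signed s) => // H; rewrite inE H orbT.
case: ifP => Hq.
  move=> _; exists (b.1, S2); last by rewrite /valid /= Hq HS2.
  by rewrite /on_bundle Hd -/(valid b) Hv Hq /= -/S2 !mem_cat inE eqxx orbT.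
move=> /(IH (PState _ _ None) erefl) [b' Hb' Hc]; exists b' => //.
by rewrite /on_bundle Hd -/(valid b) Hv Hq /= mem_cat Hb' orbT.
Qed.

Lemma on_bundles_first_broadcast s l :
  signed s = false -> delivered s = None -> has valid l ->
  exists b rest, (on_bundles t src q s l).2 = b :: rest /\ valid b /\ q \in b.2.
Proof.
elim: l s => [|b l IH] s //= Hs Hd.
case: (boolP (valid b)) => Hv /=; last first.
  by move=> /(IH _ Hs Hd); rewrite /on_bundle Hd -/(valid b) Hv.
move=> _; rewrite /on_bundle Hd -/(valid b) Hv Hs /=.
have Hsrc : src \in q |: (saved s b.1 :|: b.2) by rewrite !inE -/(valid b) Hv !orbT.
have Hq : q \in q |: (saved s b.1 :|: b.2) by rewrite !inE eqxx.
by case: ifP => _; do 2 eexists; split; first reflexivity.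
Qed.

End Handler.

Section Execution.
Variables (n t d : nat) (M : eqType) (C : {set 'I_n}) (src : 'I_n) (m : M)
  (st : nat -> 'I_n -> pstate n M) (inbox out : nat -> 'I_n -> seq (bundle n M))
  (recv : nat -> 'I_n -> nat -> 'I_n -> bool)
  (byz : nat -> 'I_n -> seq (bundle n M)).
Hypothesis exec : execution t d C src m st inbox out recv byz.
Hypothesis src_correct : src \in C.

Let exec_start := proj1 exec.
Let exec_step := proj1 (proj2 exec).
Let exec_inbox := proj1 (proj2 (proj2 exec)).
Let exec_suppress := proj1 (proj2 (proj2 (proj2 exec))).
Let exec_unforgeable := proj2 (proj2 (proj2 (proj2 exec))).

Lemma received_correct_origin a q b : b \in received_correct C out recv a q ->
  exists2 a', a = a'.+1 & exists2 p, p \in C & b \in out a' p.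
Proof.
case: a => [|a] //= /flattenP [s /mapP [p Hp ->] Hb].
by exists a => //; exists p; [rewrite mem_enum in Hp | exact: mem_mask Hb].
Qed.

Lemma received_correct_nth a p k q b0 : p \in C -> k < size (out a p) ->
  recv a p k q -> nth b0 (out a p) k \in received_correct C out recv a.+1 q.
Proof.
move=> Hp Hk Hr /=; apply/flattenP.
exists (mask [seq recv a p k q | k <- iota 0 (size (out a p))] (out a p)).
  by apply/mapP; exists p; rewrite ?mem_enum.
apply: mem_mask_nth => //; first by rewrite size_map size_iota.
by rewrite (nth_map 0) ?size_iota // nth_iota.
Qed.

Lemma inbox_origin a q b : q \in C -> b \in inbox a q ->
  b \in received_correct C out recv a q \/ b \in byz a q.
Proof. by move=> Hq; rewrite (perm_mem (exec_inbox a Hq)) mem_cat => /orP. Qed.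

Lemma mem_inbox a q b : q \in C ->
  b \in received_correct C out recv a q -> b \in inbox a q.
Proof. by move=> Hq Hb; rewrite (perm_mem (exec_inbox a Hq)) mem_cat Hb. Qed.

Lemma inbox_received a p k q : p \in C -> k < size (out a p) -> recv a p k q ->
  q \in C -> nth (m, set0) (out a p) k \in inbox a.+1 q.
Proof. by move=> Hp Hk Hr Hq; apply: mem_inbox => //; exact: received_correct_nth. Qed.

Lemma st_step a q : q \in C ->
  st a.+1 q = (on_bundles t src q (st a q) (inbox a.+1 q)).1.
Proof. by move=> Hq; rewrite -(exec_step a Hq). Qed.

Lemma out_step a q : q \in C ->
  out a.+1 q = (on_bundles t src q (st a q) (inbox a.+1 q)).2.
Proof. by move=> Hq; rewrite -(exec_step a Hq). Qed.

Definition sound_at a := forall q, q \in C ->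
  sound_state src m (st a q) /\ all (fun b => b.1 == m) (out a q).

(* A Byzantine bundle signed by [src] relays a signature that [src] saved
   two steps earlier, and by soundness [src] only ever saves signatures of [m]. *)
Lemma inbox_sound_before a q : q \in C -> (forall a', a' < a -> sound_at a') ->
  all (sound_bundle src m) (inbox a q).
Proof.
move=> Hq Hsound; apply/allP => b Hb; apply/implyP => Hv.
case: (inbox_origin Hq Hb) => [/received_correct_origin [a' Ea [p Hp Hbo]]|Hbyz].
  by have [_ /allP] := Hsound a' ltac:(lia) p Hp; apply.
have [Ha Hsaved] := exec_unforgeable Hq Hbyz src_correct Hv.
have [[Hsrc _] _] := Hsound (a - 2) ltac:(lia) src src_correct.
by apply/negPn/negP => /Hsrc; rewrite Hsaved.
Qed.

Lemma sound_at_all a : sound_at a.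
Proof.
elim/ltn_ind: a => a IH q Hq.
have Hin := inbox_sound_before Hq IH.
case: a IH Hin => [|a] IH Hin.
  have [-> ->] := exec_start Hq.
  set pre := (if q == src then _ else _).
  have Hpre : sound_state src m pre.1.
    rewrite /pre; case: ifP => _; (split; last by left);
      by move=> x Hx; rewrite /= ?/upd ?(negbTE Hx) inE.
  have [Hs Ho] := on_bundles_sound t q Hin Hpre.
  by rewrite all_cat Ho andbT; split=> //; rewrite /pre; case: ifP => //= _; rewrite eqxx.
have [Hs _] := IH a (ltnSn a) q Hq.
have [Hst Hout] := on_bundles_sound t q Hin Hs.
by rewrite st_step // out_step.
Qed.

Lemma inbox_sound a q : q \in C -> all (sound_bundle src m) (inbox a q).
Proof. by move=> Hq; apply: inbox_sound_before => // a' _; exact: sound_at_all. Qed.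

Lemma delivered_NoneVm a q : q \in C ->
  delivered (st a q) = None \/ delivered (st a q) = Some m.
Proof. by move=> Hq; have [[_ H] _] := sound_at_all a Hq. Qed.

Lemma delivered_mono a b q : q \in C -> a <= b ->
  delivered (st a q) = Some m -> delivered (st b q) = Some m.
Proof.
move=> Hq /subnK <-; elim: (b - a) => [//|k IH] /IH Hd.
by rewrite addSn st_step // on_bundles_delivered //= Hd.
Qed.

Lemma start_state q : q \in C ->
  st 0 q = (if q == src then bcast_state src m else init_state n M) /\
  out 0 q = (if q == src then [:: (m, [set src])] else [::]).
Proof.
move=> Hq; have [-> ->] := exec_start Hq.
have Hinvalid : all (fun b => ~~ valid src b) (inbox 0 q).
  apply/allP => b Hb; apply/negP => Hv.
  case: (inbox_origin Hq Hb) => [/received_correct_origin [] //|Hbyz].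
  by have [] := exec_unforgeable Hq Hbyz src_correct Hv.
by rewrite on_bundles_invalid //; case: ifP.
Qed.

Lemma quorum_delivers a q b : q \in C -> b \in inbox a.+1 q -> valid src b ->
  n + t < 2 * #|b.2| -> delivered (st a.+1 q) = Some m.
Proof.
move=> Hq Hb Hv Hquorum.
case: (delivered_NoneVm a.+1 Hq) => // Hd; rewrite st_step // in Hd.
have [_ _ Hsub Hbelow] := on_bundles_undelivered (inbox_sound a.+1 Hq) Hd.
have Hle : below_quorum t m (on_bundles t src q (st a q) (inbox a.+1 q)).1.
  by apply: Hbelow; apply/orP; left; apply/hasP; exists b.
move: Hle; rewrite /below_quorum leqNgt => /negP; case.
by apply: leq_trans Hquorum _; rewrite leq_mul2l subset_leq_card ?orbT ?Hsub.
Qed.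

Definition deliverers a := [set q in C | delivered (st a q) == Some m].

Lemma delivery_spreads a q0 : q0 \in C -> delivered (st a q0) = None ->
  delivered (st a.+1 q0) = Some m -> #|C| - d <= #|deliverers a.+2|.
Proof.
move=> Hq0 Hnone Hsome.
have Hdel : delivered (on_bundles t src q0 (st a q0) (inbox a.+1 q0)).1 != None.
  by rewrite -st_step // Hsome.
have [b Hb /andP [Hquorum Hv]] := on_bundles_quorum_broadcast Hnone Hdel.
rewrite -out_step // in Hb.
set k := index b (out a.+1 q0).
have Hk : k < size (out a.+1 q0) by rewrite index_mem.
have Hnth : nth (m, set0) (out a.+1 q0) k = b by apply: nth_index.
have Hrecv : [set q in C | recv a.+1 q0 k q] \subset deliverers a.+2.
  apply/subsetP => q /setIdP [Hq Hr]; rewrite inE Hq /=.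
  have Hin : b \in inbox a.+2 q by rewrite -Hnth; exact: inbox_received.
  by rewrite (quorum_delivers Hq Hin Hv Hquorum).
rewrite leq_subLR addnC; apply: leq_trans (card_sep_lower (exec_suppress Hq0 Hk)) _.
by rewrite leq_add2r subset_leq_card.
Qed.

Lemma small_quorum_delivery a : 3 * t + 2 * d < n -> (n + t)./2 = 0 -> 0 < a ->
  #|C| - d <= #|deliverers a|.
Proof.
move=> Hn Hh Ha.
have Hnt : n + t <= 1 by rewrite -[n + t]odd_double_half Hh; case: odd.
have Hd0 : d = 0 by lia.
have [_ Hout0] := start_state src_correct; rewrite eqxx in Hout0.
have Hk0 : 0 < size (out 0 src) by rewrite Hout0.
have Hself : recv 0 src 0 src.
  apply/negPn/negP => Hnr; have := exec_suppress src_correct Hk0.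
  by rewrite Hd0 leqn0 cards_eq0 => /eqP/setP/(_ src); rewrite !inE src_correct Hnr.
have Hin := inbox_received src_correct Hk0 Hself src_correct; rewrite Hout0 in Hin.
have Hdel := quorum_delivers src_correct Hin (set11 src) ltac:(rewrite cards1; lia).
have HC : #|C| <= 1 by apply: leq_trans (max_card _) _; rewrite card_ord; lia.
apply: leq_trans (_ : 1 <= _); first lia.
apply/card_gt0P; exists src.
by rewrite inE src_correct (delivered_mono src_correct Ha Hdel) eqxx.
Qed.

Definition echoers := [set p in C | recv 0 src 0 p] :\ src.

Definition echo p := nth (m, set0) (out 1 p) 0.

Lemma echo_broadcast p : p \in echoers ->
  [/\ 0 < size (out 1 p), valid src (echo p) & p \in (echo p).2].
Proof.
rewrite !inE => /andP [Hps /andP [Hp Hr]].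
have [Hst0 _] := start_state Hp; rewrite (negbTE Hps) in Hst0.
have [_ Hout0] := start_state src_correct; rewrite eqxx in Hout0.
have Hk0 : 0 < size (out 0 src) by rewrite Hout0.
have Hin := inbox_received src_correct Hk0 Hr Hp; rewrite Hout0 in Hin.
have Hv : has (valid src) (inbox 1 p).
  by apply/hasP; exists (m, [set src]); rewrite ?/valid ?inE.
have Hsigned : signed (st 0 p) = false by rewrite Hst0.
have Hnone : delivered (st 0 p) = None by rewrite Hst0.
have [b [rest [Hout [Hvb Hpb]]]] := on_bundles_first_broadcast t p Hsigned Hnone Hv.
by rewrite /echo out_step // Hout.
Qed.

Lemma echoers_card : #|C| <= #|echoers| + d + 1.
Proof.
have [_ Hout0] := start_state src_correct; rewrite eqxx in Hout0.
have Hk0 : 0 < size (out 0 src) by rewrite Hout0.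
apply: leq_trans (card_sep_lower (exec_suppress src_correct Hk0)) _.
rewrite addnAC leq_add2r (cardsD1 src) -/echoers addnC leq_add2l.
exact: leq_b1.
Qed.

Lemma undelivered_echoes q : 0 < (n + t)./2 -> q \in C ->
  delivered (st 2 q) != Some m ->
  #|[set p in echoers | recv 1 p 0 q]| < (n + t)./2.
Proof.
move=> Hh Hq Hnd.
have Hd : delivered (st 2 q) = None.
  by case: (delivered_NoneVm 2 Hq) => // E; rewrite E eqxx in Hnd.
rewrite st_step // in Hd.
have [_ _ Hsub Hbelow] := on_bundles_undelivered (inbox_sound 2 Hq) Hd.
set R := [set p in echoers | recv 1 p 0 q].
have [->|[p0 Hp0]] := set_0Vmem R; first by rewrite cards0.
have Hecho p : p \in R ->
    [/\ echo p \in inbox 2 q, valid src (echo p) & p \in (echo p).2].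
  move=> /setIdP [Hp Hr]; have [Hk Hv Hpp] := echo_broadcast Hp.
  by split=> //; apply: inbox_received => //; move: Hp; rewrite !inE => /and3P [].
have [Hb0 Hv0 _] := Hecho p0 Hp0.
have Hle : below_quorum t m (on_bundles t src q (st 1 q) (inbox 2 q)).1.
  by apply: Hbelow; apply/orP; left; apply/hasP; exists (echo p0).
have HR : src |: R \subset saved (on_bundles t src q (st 1 q) (inbox 2 q)).1 m.
  apply/subsetP => x /setU1P [->|Hx]; first exact: (subsetP (Hsub _ Hb0 Hv0)).
  by have [Hb Hv Hxx] := Hecho x Hx; exact: (subsetP (Hsub _ Hb Hv)).
have Hsrc : src \notin R by rewrite !inE eqxx.
have := subset_leq_card HR; rewrite cardsU1 Hsrc add1n => HRcard.
by rewrite geq_half_double -mul2n (leq_trans _ Hle) // leq_mul2l HRcard orbT.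
Qed.

Definition failures2 := [set q in C | delivered (st 2 q) != Some m].

(* Count the pairs (echoer p, failure q) such that q receives p's echo. *)
Lemma failures2_double_count : 0 < (n + t)./2 ->
  #|echoers| * #|failures2| <= #|failures2| * ((n + t)./2).-1 + #|echoers| * d.
Proof.
move=> Hh.
have Hfail : \sum_(q in failures2) #|[set p in echoers | recv 1 p 0 q]|
    <= #|failures2| * ((n + t)./2).-1.
  rewrite -sum_nat_const; apply: leq_sum => q /setIdP [Hq Hnd].
  by have := undelivered_echoes Hh Hq Hnd; case: ((n + t)./2).
have Hecho : #|echoers| * #|failures2|
    <= \sum_(p in echoers) #|[set q in failures2 | recv 1 p 0 q]| + #|echoers| * d.
  rewrite -!sum_nat_const -big_split /=; apply: leq_sum => p Hp.
  have [Hk _ _] := echo_broadcast Hp.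
  have Hpc : p \in C by move: Hp; rewrite !inE => /and3P [].
  apply: card_sep_lower; apply: leq_trans (exec_suppress Hpc Hk).
  by apply/subset_leq_card/subsetP => q; rewrite !inE => /andP [/andP [-> _] ->].
by rewrite (double_count failures2 echoers (fun p q => recv 1 p 0 q)) in Hfail; lia.
Qed.

Lemma card_deliverers2_failures2 : #|C| <= #|deliverers 2| + #|failures2|.
Proof. exact: card_sep_lower. Qed.

Lemma two_step_delivery : 0 < (n + t)./2 ->
  d * ((n + t)./2).+1 + (n + t)./2 < #|C| -> #|C| - d <= #|deliverers 2|.
Proof.
move=> Hh Hcond.
have := failures2_double_count Hh; have := echoers_card.
have := card_deliverers2_failures2.
nia.
Qed.

Lemma three_step_delivery : 0 < (n + t)./2 -> d < #|C| ->
  #|C| * (n + t)./2 < (#|C| - d) * (#|C| - d) -> #|C| - d <= #|deliverers 3|.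
Proof.
move=> Hh Hdc Hcond.
have : 0 < #|deliverers 2|.
  rewrite lt0n; apply/eqP => Hnone.
  have Hsub : failures2 \subset C by apply/subsetP => q /setIdP [].
  have Hall : #|failures2| = #|C|.
    apply/eqP; rewrite eqn_leq subset_leq_card //=.
    by have := card_deliverers2_failures2; rewrite Hnone.
  have := failures2_double_count Hh; have := echoers_card; rewrite Hall; nia.
case/card_gt0P => q0 /setIdP [Hq0 /eqP Hd2].
have [Hst0 _] := start_state Hq0.
have Hd0 : delivered (st 0 q0) = None by rewrite Hst0; case: ifP.
case: (delivered_NoneVm 1 Hq0) => Hd1; first exact: delivery_spreads Hq0 Hd1 Hd2.
apply: leq_trans (delivery_spreads Hq0 Hd0 Hd1) _.
apply/subset_leq_card/subsetP => q /setIdP [Hq /eqP Hq2].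
by rewrite inE Hq (delivered_mono (a := 2) Hq _ Hq2) ?eqxx.
Qed.

End Execution.

Theorem mainTheorem10 (n t d : nat) (M : eqType) (C : {set 'I_n})
    (src : 'I_n) (m : M)
    (st : nat -> 'I_n -> pstate n M) (inbox out : nat -> 'I_n -> seq (bundle n M))
    (recv : nat -> 'I_n -> nat -> 'I_n -> bool)
    (byz : nat -> 'I_n -> seq (bundle n M)) :
  3 * t + 2 * d < n ->
  n - t <= #|C| ->
  d < #|C| ->
  src \in C ->
  execution t d C src m st inbox out recv byz ->
  (two_step_cond n t d #|C| ->
     #|C| - d <= #|[set q in C | delivered (st 2 q) == Some m]|) /\
  (three_step_cond n t d #|C| ->
     #|C| - d <= #|[set q in C | delivered (st 3 q) == Some m]|).
Proof.
move=> Hn _ Hdc Hsrc Hexec.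
have [Hh0|Hh] := posnP ((n + t)./2).
  by split=> _; apply: (small_quorum_delivery Hexec Hsrc).
split=> [/two_step_cond_nat | /(three_step_cond_nat Hdc)] Hcond.
  exact: (two_step_delivery Hexec Hsrc).
exact: (three_step_delivery Hexec Hsrc).
Qed.
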